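(* For every $n\ge1$, $\hat r_n\le\frac85$.
   Context: Equal responsibilities $1/n$, chores $e_1,e_2,\ldots,e_m$. A picking order is $S=(S_1,\ldots,S_m)\in[n]^m$; it allocates $A_i(S)=\{e_r:S_r=i\}$ to agent $i$. For an agent $i$ with additive disvaluation $c_i$ satisfying $c_i(e_1)\ge c_i(e_2)\ge\cdots$, let $CS_i=\max\{\frac1n c_i(\{e_1,\ldots,e_m\}),c_i(e_1),c_i(e_n)+c_i(e_{n+1})\}$ (with $c_i(e_j)=0$ for $j>m$). Let $r_{n,m}(S)=\sup_{i}\sup_{c_i}c_i(A_i(S))/CS_i$, the supremum over agents and over such non-increasing additive $c_i$. $S$ is a ridge picking order if $m\ge 2n$, $S_r=r$ for $1\le r\le n$ and $S_{n+r}=n-r+1$ for $1\le r\le n$ (agent $i$ gets $e_i$ and $e_{2n-i+1}$). Let $\hat r_{n,m}=\min\{r_{n,m}(S):S\text{ a ridge picking order of length }m\}$ and $\hat r_n=\sup_{m\ge 2n}\hat r_{n,m}$. *)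

From mathcomp Require Import all_boot all_order all_algebra.
From mathcomp Require Import reals.
Set Implicit Arguments. Unset Strict Implicit. Unset Printing Implicit Defensive.
Import Order.TTheory GRing.Theory Num.Theory.
Local Open Scope ring_scope.

(* Chores e_1,...,e_m are indexed 0,...,m-1; agents 1..n are indexed 0..n-1.
   A picking order S = (S_1,...,S_m) is a function 'I_m -> 'I_n.
   A disvaluation of an agent is given by the sequence c = [c(e_1);...;c(e_m)];
   c`_j = nth 0 c j, so c(e_j) = 0 for j > m automatically. *)

Section Defs.
Variable R : realType.

Definition admissible_cost (m : nat) (c : seq R) : Prop :=
  [/\ size c = m, sorted (fun x y => y <= x) c & all (fun x => 0 <= x) c].

Definition bundle_cost (n m : nat) (S : 'I_m -> 'I_n) (i : 'I_n) (c : seq R) : R :=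
  \sum_(r < m | S r == i) c`_r.

Definition CS (n : nat) (c : seq R) : R :=
  Num.max (n%:R^-1 * \sum_(x <- c) x) (Num.max c`_0 (c`_n.-1 + c`_n)).

(* ridge picking order: m >= 2n, S_r = r (1<=r<=n), S_{n+r} = n-r+1 (1<=r<=n);
   0-indexed: position r < n gets agent r, position n <= r < 2n gets 2n-1-r. *)
Definition ridge (n m : nat) (S : 'I_m -> 'I_n) : Prop :=
  [/\ (2 * n <= m)%N,
      forall r : 'I_m, (r < n)%N -> val (S r) = val r
    & forall r : 'I_m, (n <= r < 2 * n)%N -> val (S r) = (2 * n - 1 - r)%N].

(* r_{n,m}(S) <= rho : for every agent i and admissible c, c(A_i(S)) <= rho * CS_i
   (this is sup_i sup_c c(A_i(S))/CS_i <= rho; when CS_i = 0 all costs vanish). *)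
Definition ratio_le (n m : nat) (S : 'I_m -> 'I_n) (rho : R) : Prop :=
  forall (i : 'I_n) (c : seq R), admissible_cost m c ->
    bundle_cost S i c <= rho * CS n c.

End Defs.

From mathcomp Require Import all_boot all_order all_algebra.
From mathcomp Require Import reals.
From mathcomp Require Import zify lra.
Import Order.TTheory GRing.Theory Num.Theory.

Set Implicit Arguments.
Unset Strict Implicit.
Unset Printing Implicit Defensive.

(* After the ridge, the chores are handed out periodically, 5n per period.  The
   agents are cut into six tiers at n/4, 2n/5, n/2, 3n/5 and 17n/20, and a period
   visits the tiers in the order [blocks], each visit giving one chore to every
   agent of the tier, in decreasing order of index.  If agent i gets L chores
   per period, then among the first k chores i gets at most the k-th prefix sum
   of the weights (L + Y1 [r = 0] + Y2 ([r = n-1] + [r = n])) / 5n, where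
   Y1 = max(0, 5n - L (i+1)) and L n + Y1 + Y2 = 8n.  As the costs are
   nonincreasing, Abel summation bounds c(A_i) by
   (L c(all chores) + Y1 c(e_1) + Y2 (c(e_n) + c(e_{n+1}))) / 5n <= 8/5 CS_i. *)

Lemma nat_bracket (f : nat -> nat) k i :
  f 0 <= i < f k -> exists2 t, t < k & f t <= i < f t.+1.
Proof.
elim: k => [|k IHk] /andP[le_f0i lt_ifk]; first by rewrite leqNgt lt_ifk in le_f0i.
case: (ltnP i (f k)) => [lt_ifk'|le_fki]; last by exists k; rewrite ?le_fki.
by case: IHk => [|t lt_tk]; [rewrite le_f0i | exists t => //; apply: ltnW].
Qed.

Lemma count_iota_le (P : pred nat) (s : seq nat) j :
  (forall a, a < j -> P a -> a \in s) -> count P (iota 0 j) <= count (fun x => x < j) s.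
Proof.
move=> Ps; rewrite -!size_filter uniq_leq_size ?filter_uniq ?iota_uniq // => a.
by rewrite !mem_filter mem_iota add0n => /andP[Pa /andP[_ lt_aj]]; rewrite /= lt_aj Ps.
Qed.

Lemma count_iotaD (P : pred nat) p j :
  count P (iota 0 (p + j)) = count P (iota 0 p) + count (fun a => P (p + a)) (iota 0 j).
Proof. by rewrite iotaD count_cat add0n -[in iota p j](addn0 p) iotaDl count_map. Qed.

Lemma sorted_count_lt_le (s : seq nat) (U : nat) (F : nat -> nat) :
  sorted ltn s -> {homo F : x y / x <= y} ->
  (forall q, q < size s -> U * q.+1 <= F (nth 0 s q).+1) ->
  forall j, U * count (fun x => x < j) s <= F j.
Proof.
elim: s F => [|x s IHs] F /= s_sorted F_homo F_s j; first by rewrite muln0.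
have x_lt_s : all (ltn x) s := order_path_min ltn_trans s_sorted.
case: (ltnP x j) => [lt_xj|le_jx] /=; last first.
  suff -> : count (fun x => x < j) s = 0 by rewrite muln0.
  apply/eqP; rewrite -leqn0 leqNgt -has_count; apply/hasPn => y /(allP x_lt_s) /=.
  by move=> lt_xy; rewrite -leqNgt (leq_trans le_jx) // ltnW.
have U_le : U <= F j by have := F_s 0 isT; rewrite muln1 => /leq_trans->; rewrite ?F_homo.
suff : U * count (fun x => x < j) s <= F j - U by rewrite add1n mulnS; lia.
apply: (IHs (fun y => F y - U) (path_sorted s_sorted)) => [y z le_yz | q lt_qs].
  by rewrite leq_sub2r ?F_homo.
by have /= := F_s q.+1 lt_qs; rewrite mulnS; lia.
Qed.

Lemma sum_nat_count (P : pred nat) k : \sum_(r < k) (P r : nat) = count P (iota 0 k).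
Proof.
rewrite -sum1_count [RHS]big_mkcond -(big_mkord xpredT (fun r => (P r : nat))) /index_iota subn0.
by apply: eq_bigr => r _; case: (P r).
Qed.

Section Summation.
Local Open Scope ring_scope.

Lemma sum_indicator_mul (R : pzSemiRingType) m p (c : nat -> R) : (p < m)%N ->
  \sum_(r < m) ((r : nat) == p)%:R * c r = c p.
Proof.
move=> lt_pm; rewrite (eq_bigr (fun r : 'I_m => if (r : nat) == p then c r else 0)).
  by rewrite -big_mkcond big_ord1_eq lt_pm.
by move=> r _; case: eqP; rewrite ?mul1r ?mul0r.
Qed.

Lemma ler_sum_mul_nonincr (R : numDomainType) m (a w c : nat -> R) :
  (forall k, (k.+1 < m)%N -> c k.+1 <= c k) -> (forall k, (k < m)%N -> 0 <= c k) ->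
  (forall k, (k <= m)%N -> \sum_(r < k) a r <= \sum_(r < k) w r) ->
  \sum_(r < m) a r * c r <= \sum_(r < m) w r * c r.
Proof.
move=> c_nonincr c_ge0 a_le_w.
pose e r := w r - a r.
have e_ge0 k : (k <= m)%N -> 0 <= \sum_(r < k) e r by move/a_le_w; rewrite sumrB subr_ge0.
have abel k : (k < m)%N -> (\sum_(r < k.+1) e r) * c k <= \sum_(r < k.+1) e r * c r.
  elim: k => [|k IHk] lt_km; first by rewrite !big_ord1.
  rewrite [in X in _ <= X]big_ord_recr [in X in X <= _]big_ord_recr [X in X <= _]mulrDl lerD2r.
  apply: le_trans (IHk (ltnW lt_km)).
  by rewrite ler_wpM2l ?e_ge0 ?c_nonincr // ltnW.
rewrite -subr_ge0 -sumrB (eq_bigr (fun r : 'I_m => e r * c r)) => [|r _]; last by rewrite mulrBl.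
case: m c_nonincr c_ge0 a_le_w e_ge0 abel => [|m] _ c_ge0 _ e_ge0 abel; first by rewrite big_ord0.
by apply: le_trans (abel m (ltnSn m)); rewrite mulr_ge0 ?e_ge0 ?c_ge0.
Qed.

End Summation.

Section Schedule.
Variable n : nat.

Definition tier_bound t :=
  match t with
  | 0 => 0 | 1 => n %/ 4 | 2 => (2 * n) %/ 5 | 3 => n %/ 2
  | 4 => (3 * n) %/ 5 | 5 => (17 * n) %/ 20 | _ => n
  end.

Arguments tier_bound : simpl never.

Definition tier_width t := tier_bound t.+1 - tier_bound t.

Definition in_tier i t := tier_bound t <= i < tier_bound t.+1.

Definition blocks :=
  [:: 4; 5; 3; 2; 1; 4; 5; 3; 0; 4; 2; 5; 3; 1; 4; 2; 5; 3; 4; 0; 1; 5; 2; 3; 4;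
      5; 4; 3; 2; 1; 0].

(* The value 0 past the last block is never used: see [period_length]. *)
Fixpoint block_agent (bs : seq nat) a :=
  if bs is t :: bs' then
    if a < tier_width t then tier_bound t.+1 - 1 - a
    else block_agent bs' (a - tier_width t)
  else 0.

Definition period_agent a := block_agent blocks a.

Definition block_start b := sumn (map tier_width (take b blocks)).

Definition period_slots i :=
  [seq block_start b + (tier_bound (nth 0 blocks b).+1 - 1 - i)
  | b <- iota 0 (size blocks) & in_tier i (nth 0 blocks b)].

Definition schedule r :=
  if r < n then r
  else if r < 2 * n then 2 * n - 1 - r
  else period_agent ((r - 2 * n) %% (5 * n)).

Lemma tier_bound_homo : {homo tier_bound : s t / s <= t}.
Proof.
move=> s t; rewrite /tier_bound.
by case: s => [|[|[|[|[|[|[|s]]]]]]]; case: t => [|[|[|[|[|[|[|t]]]]]]] //=; lia.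
Qed.

Lemma tier_widthE t : tier_bound t + tier_width t = tier_bound t.+1.
Proof. by rewrite /tier_width subnKC // tier_bound_homo. Qed.

Lemma tier_bound_le t : tier_bound t <= n.
Proof. by rewrite /tier_bound; case: t => [|[|[|[|[|[|t]]]]]]; lia. Qed.

Lemma in_tier_inj i s t : in_tier i s -> in_tier i t -> s = t.
Proof.
wlog lt_st : s t / s < t => [hwlog|].
  by case: (ltngtP s t) => [/hwlog|/hwlog h si ti|//]; [apply | rewrite (h ti si)].
rewrite /in_tier => /andP[_ lt_is] /andP[le_ti _].
have := tier_bound_homo lt_st; lia.
Qed.

Lemma tier_exists i : i < n -> exists2 t, t < 6 & in_tier i t.
Proof. by move=> lt_in; apply: nat_bracket; rewrite /tier_bound lt_in. Qed.

Lemma period_slots_tier i t : in_tier i t ->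
  period_slots i = [seq block_start b + (tier_bound t.+1 - 1 - i)
                   | b <- iota 0 (size blocks) & nth 0 blocks b == t].
Proof.
move=> it; rewrite /period_slots (@eq_filter _ _ (fun b => nth 0 blocks b == t)).
  by apply/eq_in_map => b; rewrite mem_filter => /andP[/eqP-> _].
by move=> b; apply/idP/eqP => [/in_tier_inj/(_ it)|->].
Qed.

Lemma tier_bound_spec :
  [/\ tier_bound 0 = 0, tier_bound 6 = n,
      4 * tier_bound 1 <= n < 4 * tier_bound 1 + 4,
      5 * tier_bound 2 <= 2 * n < 5 * tier_bound 2 + 5 &
      [/\ 2 * tier_bound 3 <= n < 2 * tier_bound 3 + 2,
          5 * tier_bound 4 <= 3 * n < 5 * tier_bound 4 + 5 &
          20 * tier_bound 5 <= 17 * n < 20 * tier_bound 5 + 20]].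
Proof. by rewrite /tier_bound /=; split; [..| split]; lia. Qed.

Definition load i := size (period_slots i).
Definition first_bonus i := 5 * n - load i * i.+1.
Definition pair_bonus i := 8 * n - load i * n - first_bonus i.

Lemma period_slots_bounds i : i < n ->
  [/\ load i * n + first_bonus i <= 8 * n,
      10 * n <= load i * (2 * n - i) + first_bonus i + 2 * pair_bonus i,
      sorted ltn (period_slots i) &
      forall q, q < size (period_slots i) ->
        5 * n * q.+1 + first_bonus i <= load i * (nth 0 (period_slots i) q).+1 + 6 * n].
Proof.
case/tier_exists => t lt_t6 it.
rewrite /pair_bonus /first_bonus /load (period_slots_tier it).
have [b0 b6 b1 b2 [b3 b4 b5]] := tier_bound_spec.
have w := tier_widthE.
move: (w 0) (w 1) (w 2) (w 3) (w 4) (w 5) it; clear w; rewrite /in_tier /block_start.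
(* Tier by tier the slots are explicit and every condition is linear in n, i
   and the tier bounds. *)
case: t lt_t6 => [|[|[|[|[|[|t]]]]]] // _ /= *.
all: split; [lia | lia | simpl; lia | by case=> [|[|[|[|[|[|[|q]]]]]]] //= _; lia].
Qed.

Lemma block_agent_spec bs a : a < sumn (map tier_width bs) ->
  exists2 b, b < size bs &
    in_tier (block_agent bs a) (nth 0 bs b) /\
    a = sumn (map tier_width (take b bs))
        + (tier_bound (nth 0 bs b).+1 - 1 - block_agent bs a).
Proof.
elim: bs a => [|t bs IHbs] a //= lt_a.
case: ifP => lt_aw.
  by exists 0 => //=; move: lt_aw; rewrite /in_tier -tier_widthE; lia.
have [|b lt_b [b_tier a_eq]] := IHbs (a - tier_width t); first lia.
by exists b.+1 => //=; split => //; lia.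
Qed.

Lemma period_length : 5 * n <= sumn (map tier_width blocks).
Proof.
have [b0 b6 b1 b2 [b3 b4 b5]] := tier_bound_spec.
have w := tier_widthE.
by move: (w 0) (w 1) (w 2) (w 3) (w 4) (w 5) => /= *; lia.
Qed.

Lemma period_agent_slot a : a < 5 * n ->
  period_agent a < n /\ a \in period_slots (period_agent a).
Proof.
move=> lt_a; have [b lt_b [b_tier a_eq]] := block_agent_spec (leq_trans lt_a period_length).
split; first by case/andP: b_tier => _ /leq_trans->; rewrite ?tier_bound_le.
by apply/mapP; exists b; rewrite // mem_filter mem_iota b_tier lt_b.
Qed.

Lemma schedule_lt r : 0 < n -> schedule r < n.
Proof.
move=> n_gt0; rewrite /schedule; case: (ltnP r n) => // le_nr.
case: (ltnP r (2 * n)) => [lt_r2n|_]; first lia.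
have lt_5n : 0 < 5 * n by rewrite muln_gt0.
by case: (period_agent_slot (ltn_pmod (r - 2 * n) lt_5n)).
Qed.

Definition picks i k := count (fun r => schedule r == i) (iota 0 k).
Definition period_picks i j := count (fun a => period_agent (a %% (5 * n)) == i) (iota 0 j).

Lemma picks_ridge i k : i < n -> k <= 2 * n -> picks i k = (i < k) + (2 * n - 1 - i < k).
Proof.
move=> lt_in; elim: k => [|k IHk] le_k; first by rewrite /picks !ltn0.
have -> : picks i k.+1 = picks i k + (schedule k == i).
  by rewrite /picks -addn1 count_iotaD /= !addn0.
rewrite IHk ?(ltnW le_k) // /schedule.
by case: ifP => lt_kn; [|rewrite ifT]; lia.
Qed.

Lemma picks_beyond_ridge i j : picks i (2 * n + j) = picks i (2 * n) + period_picks i j.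
Proof.
rewrite /picks count_iotaD; apply/eqP; rewrite eqn_add2l; apply/eqP.
apply: eq_count => a; rewrite /schedule addKn.
by have [-> ->] : (2 * n + a < n) = false /\ (2 * n + a < 2 * n) = false by split; lia.
Qed.

Lemma period_picks_periodic i j :
  period_picks i (5 * n + j) = period_picks i (5 * n) + period_picks i j.
Proof.
rewrite /period_picks count_iotaD; apply/eqP; rewrite eqn_add2l; apply/eqP.
by apply: eq_count => a; rewrite modnDl.
Qed.

Definition weight i r :=
  load i + first_bonus i * (r == 0) + pair_bonus i * ((r == n.-1) + (r == n)).

Lemma sum_weight i k : \sum_(r < k) weight i r =
  load i * k + first_bonus i * (0 < k) + pair_bonus i * ((n.-1 < k) + (n < k)).
Proof.
elim: k => [|k IHk]; first by rewrite big_ord0 !muln0.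
have ltnS_nat p : (p < k.+1) = (p < k) + (k == p) :> nat by lia.
by rewrite big_ord_recr /= IHk /weight !ltnS_nat mulnS !mulnDr; lia.
Qed.

Section Agent.
Variable i : nat.
Hypothesis lt_in : i < n.

Lemma period_picks_le_slots j : j <= 5 * n ->
  period_picks i j <= count (fun x => x < j) (period_slots i).
Proof.
move=> le_j; apply: count_iota_le => a lt_aj /eqP <-.
have lt_a5n := leq_trans lt_aj le_j.
by rewrite modn_small //; case: (period_agent_slot lt_a5n).
Qed.

Lemma period_picks_le j : 5 * n * period_picks i j <= load i * j + 6 * n - first_bonus i.
Proof.
have [_ _ slots_sorted slots_q] := period_slots_bounds lt_in.
pose F x := load i * x + 6 * n - first_bonus i.
have F_homo : {homo F : x y / x <= y}.
  by move=> x y le_xy; have := leq_mul (leqnn (load i)) le_xy; rewrite /F; lia.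
have F_slots q : q < size (period_slots i) -> 5 * n * q.+1 <= F (nth 0 (period_slots i) q).+1.
  by move=> /slots_q; rewrite /F; lia.
have le_period j' : j' <= 5 * n -> 5 * n * period_picks i j' <= F j'.
  move=> le_j'; apply: leq_trans (sorted_count_lt_le slots_sorted F_homo F_slots j').
  by rewrite leq_mul2l period_picks_le_slots ?orbT.
have le_load : 5 * n * period_picks i (5 * n) <= 5 * n * load i.
  by rewrite leq_mul2l /load (leq_trans (period_picks_le_slots _)) ?count_size ?orbT.
elim/ltn_ind: j => j IHj; case: (leqP j (5 * n)) => [/le_period // | lt_5n_j].
have [j' j_eq] : exists j', j = 5 * n + j' by exists (j - 5 * n); lia.
have lt_j'j : j' < j by lia.
have := IHj j' lt_j'j.
have le_bonus : first_bonus i <= 5 * n by apply: leq_subr.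
by rewrite j_eq period_picks_periodic 2!mulnDr; lia.
Qed.

Lemma picks_le_weight k : 5 * n * picks i k <= \sum_(r < k) weight i r.
Proof.
have [le_8n le_10n _ _] := period_slots_bounds lt_in.
have ge_bonus : 5 * n <= load i * i.+1 + first_bonus i by rewrite /first_bonus; lia.
have pair_bonusE : load i * n + first_bonus i + pair_bonus i = 8 * n by rewrite /pair_bonus; lia.
have load_mono x y : x <= y -> load i * x <= load i * y by move=> le_xy; rewrite leq_mul2l le_xy orbT.
rewrite sum_weight; case: (leqP k (2 * n)) => [le_k2n | lt_2n_k]; last first.
  have [j ->] : exists j, k = 2 * n + j by exists (k - 2 * n); lia.
  have [-> -> ->] : [/\ 0 < 2 * n + j, n.-1 < 2 * n + j & n < 2 * n + j] by split; lia.
  have := period_picks_le j.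
  by rewrite picks_beyond_ridge picks_ridge //; lia.
rewrite picks_ridge //; case: (leqP k i) => [le_ki | lt_ik].
  have -> : (2 * n - 1 - i < k) = false by lia.
  by rewrite addn0 muln0.
have -> : 0 < k by lia.
have := load_mono _ _ lt_ik.
case: (leqP k (2 * n - 1 - i)) => [le_k | lt_k].
  by move: (pair_bonus i * _) => extra; lia.
have [-> ->] : (n.-1 < k) /\ (n < k) by split; lia.
by have := load_mono (2 * n - i) k; lia.
Qed.

End Agent.

End Schedule.

Local Open Scope ring_scope.

Lemma sum_weight_mul (R : pzSemiRingType) n i m (c : nat -> R) : (n < m)%N ->
  \sum_(r < m) (weight n i r)%:R * c r =
  (load n i)%:R * \sum_(r < m) c r + (first_bonus n i)%:R * c 0%N
  + (pair_bonus n i)%:R * (c n.-1 + c n).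
Proof.
move=> lt_nm; have lt_n1m := leq_ltn_trans (leq_pred n) lt_nm.
have lt_0m := leq_ltn_trans (leq0n n) lt_nm.
rewrite (eq_bigr (fun r : 'I_m => (load n i)%:R * c r
  + (first_bonus n i)%:R * (((r : nat) == 0%N)%:R * c r)
  + (pair_bonus n i)%:R * (((r : nat) == n.-1)%:R * c r)
  + (pair_bonus n i)%:R * (((r : nat) == n)%:R * c r))) => [|r _].
  by rewrite !big_split -!mulr_sumr !sum_indicator_mul // [in RHS]mulrDr addrA.
by rewrite /weight !natrD !natrM !natrD !mulrDr !mulrDl !mulrA addrA.
Qed.

Lemma CS_bounds (R : realType) n (c : seq R) : (0 < n)%N ->
  [/\ \sum_(x <- c) x <= n%:R * CS n c, c`_0 <= CS n c & c`_n.-1 + c`_n <= CS n c].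
Proof.
move=> n_gt0; rewrite /CS; split; rewrite ?le_max ?lexx ?orbT //.
by rewrite -ler_pdivrMl ?ltr0n // le_max lexx.
Qed.

Lemma schedule_bundle_cost_le (R : realType) n m (S : 'I_m -> 'I_n) (i : 'I_n) (c : seq R) :
  (n < m)%N -> (forall r, val (S r) = schedule n r) -> admissible_cost m c ->
  (5 * n)%:R * bundle_cost S i c <= (8 * n)%:R * CS n c.
Proof.
move=> lt_nm S_sched [size_c c_sorted c_ge0].
have n_gt0 : (0 < n)%N := leq_ltn_trans (leq0n i) (ltn_ord i).
have [le_8n _ _ _] := period_slots_bounds (ltn_ord i).
have [sum_le first_le pair_le] := CS_bounds c n_gt0.
have -> : (5 * n)%:R * bundle_cost S i c =
    \sum_(r < m) (5 * n * (schedule n r == i))%:R * c`_r.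
  rewrite /bundle_cost mulr_sumr big_mkcond; apply: eq_bigr => r _.
  by rewrite -val_eqE S_sched; case: eqP; rewrite ?muln1 ?muln0 ?mulr0 ?mul0r.
apply: (le_trans (ler_sum_mul_nonincr (a := fun r => (5 * n * (schedule n r == i))%:R)
  (w := fun r => (weight n i r)%:R) (c := nth 0 c) _ _ _)).
- by move=> k; rewrite -size_c => /(sortedP 0 c_sorted).
- by move=> k; rewrite -size_c; apply/all_nthP.
- move=> k _; rewrite -!natr_sum ler_nat -big_distrr /=.
  by rewrite (sum_nat_count (fun r => schedule n r == i)) picks_le_weight.
rewrite (big_nth 0) size_c big_mkord in sum_le.
have weightsE : (8 * n)%:R = (load n i * n + first_bonus n i + pair_bonus n i)%:R :> R.
  by congr (_%:R); rewrite /pair_bonus; lia.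
rewrite (sum_weight_mul i (nth 0 c) lt_nm) weightsE !natrD natrM !mulrDl -mulrA.
by rewrite !lerD ?ler_wpM2l.
Qed.

Theorem theorem6 (R : realType) (n : nat) :
  (1 <= n)%N ->
  forall m : nat, (2 * n <= m)%N ->
  exists S : 'I_m -> 'I_n, ridge S /\ ratio_le S (8 / 5 : R).
Proof.
move=> n_gt0 m le_2n_m.
pose S (r : 'I_m) : 'I_n := Ordinal (schedule_lt r n_gt0).
exists S; split.
  split=> // r /=; rewrite /schedule; first by move=> ->.
  by case/andP=> le_nr ->; rewrite ltnNge le_nr.
move=> i c c_adm; have lt_nm : (n < m)%N by lia.
have := schedule_bundle_cost_le (S := S) i lt_nm (fun r => erefl) c_adm.
by rewrite !natrM (mulrC 5%:R) (mulrC 8%:R) -!mulrA ler_pM2l ?ltr0n //; lra.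
Qed.
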